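(* Let $\nabla$ be a symplectic self-duality of a locally compact abelian group $L$. If $L$ has a compact open subgroup, then $L$ has a compact open subgroup $G$ with $G=\{x\in L:\nabla(x)(g)=0\ \text{for all } g\in G\}$ (i.e. a compact open maximal isotropic subgroup).
   Context: $\mathbf T=\mathbf R/\mathbf Z$; $\hat L$ is the Pontryagin dual of a locally compact abelian group $L$. A symplectic self-duality of $L$ is an isomorphism of topological groups $\nabla:L\to\hat L$ with $\nabla(x)(x)=0$ for all $x\in L$. A subgroup $N$ is isotropic if $\nabla(x)(y)=0$ for all $x,y\in N$. *)

From HB Require Import structures.
From mathcomp Require Import all_boot all_order all_algebra generic_quotient.
From mathcomp Require Import all_classical all_reals all_analysis.
From mathcomp Require Import Rstruct Rstruct_topology.
Set Implicit Arguments. Unset Strict Implicit. Unset Printing Implicit Defensive.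
Import Order.TTheory GRing.Theory Num.Theory.
Local Open Scope classical_set_scope.
Local Open Scope ring_scope.
Local Open Scope quotient_scope.

Definition Rreal : realType := Rdefinitions.R.

Definition modZ_rel : rel Rreal := fun x y => (x - y) \is a Num.int.

Lemma modZ_refl : reflexive modZ_rel.
Proof. by move=> x; rewrite /modZ_rel subrr rpred0. Qed.

Lemma modZ_sym : symmetric modZ_rel.
Proof. by move=> x y; rewrite /modZ_rel -opprB rpredN. Qed.

Lemma modZ_trans : transitive modZ_rel.
Proof.
move=> y x z; rewrite /modZ_rel => hxy hyz.
by rewrite -(subrKA y) addrC; apply: rpredD.
Qed.

Definition modZ : equiv_rel Rreal := EquivRel modZ_rel modZ_refl modZ_sym modZ_trans.

Definition RmodZ := {eq_quot modZ}%qT.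
Definition TT : topologicalType := quotient_topology RmodZ.

Definition Tzero : TT := \pi_RmodZ (0 : Rreal).
Definition Tadd (a b : TT) : TT := \pi_RmodZ (repr a + repr b : Rreal).

(** * Pontryagin dual of a topological abelian group L:
    continuous homomorphisms L -> T, as a subset of the space L -> T
    carrying the compact-open topology. *)
Definition is_character (L : topologicalZmodType) (chi : L -> TT) : Prop :=
  continuous chi /\ forall x y : L, chi (x + y) = Tadd (chi x) (chi y).

Definition dual (L : topologicalZmodType) : set {compact-open, L -> TT} :=
  [set chi | is_character chi].
Arguments dual : clear implicits.

Definition LCA (L : topologicalZmodType) : Prop :=
  hausdorff_space L /\ locally_compact [set: L].

(** nabla : L -> hat L is an isomorphism of topological groups *)
Definition topgrp_iso_dual (L : topologicalZmodType) (nabla : L -> L -> TT) : Prop :=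
  [/\ (forall x, dual L (nabla x)),
      (forall x y z, nabla (x + y) z = Tadd (nabla x z) (nabla y z)),
      (injective nabla /\ forall chi, dual L chi -> exists x, nabla x = chi),
      continuous (nabla : L -> {compact-open, L -> TT})
    & (forall U : set L, open U ->                       (* open onto hat L *)
         exists V : set {compact-open, L -> TT}, open V /\ nabla @` U = V `&` dual L)].

Definition symplectic_self_duality (L : topologicalZmodType) (nabla : L -> L -> TT) : Prop :=
  topgrp_iso_dual nabla /\ forall x : L, nabla x x = Tzero.

Definition is_subgroup (L : zmodType) (G : set L) : Prop :=
  G 0 /\ forall x y, G x -> G y -> G (x - y).

Definition compact_open_subgroup (L : topologicalZmodType) (G : set L) : Prop :=
  [/\ is_subgroup G, compact G & open G].

From HB Require Import structures.
From mathcomp Require Import all_boot all_order all_algebra generic_quotient finmap.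
From mathcomp Require Import all_classical all_reals all_analysis.
From mathcomp Require Import Rstruct Rstruct_topology ring lra zify.
Set Implicit Arguments. Unset Strict Implicit. Unset Printing Implicit Defensive.
Import Order.TTheory GRing.Theory Num.Theory.
Local Open Scope classical_set_scope.
Local Open Scope ring_scope.
Local Open Scope quotient_scope.

(* Write x ⟂ y when ∇(x)(y) = 0; since ∇ is alternating, ⟂ is symmetric.
   Let H be a compact open subgroup.  By continuity of ∇, every ∇(x) with x near 0
   maps H into a small neighbourhood of 0 in T, hence kills H because T has no
   small subgroups; so U = H ∩ H^⟂ is an open isotropic subgroup.  By Zorn, U lies
   in a maximal isotropic set M, and maximality gives M = M^⟂, an open, hence
   closed, subgroup.  By openness of ∇, ∇(H) contains a compact-open neighbourhood
   {χ | χ(K) ⊆ W} of 0; covering K by finitely many translates f + U shows that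
   the values of x ∈ U^⟂ at these points f determine ∇(x) on K up to a small
   error, so U^⟂ is covered by finitely many translates of H.  Thus the closed
   set M ⊆ U^⟂ is compact. *)

Definition piT (r : Rreal) : TT := \pi_RmodZ r.

Lemma piT_eq a b : piT a = piT b <-> (a - b) \is a Num.int.
Proof. by split => /(@eqquotP _ _ RmodZ). Qed.

Lemma piT_repr (t : TT) : piT (repr t) = t.
Proof. exact: reprK. Qed.

Lemma repr_piT r : (repr (piT r) - r) \is a Num.int.
Proof. by apply/piT_eq; rewrite piT_repr. Qed.

Lemma Tadd_piT a b : Tadd (piT a) (piT b) = piT (a + b).
Proof. by apply/piT_eq; rewrite opprD addrACA rpredD // repr_piT. Qed.

Definition nearZ (e r : Rreal) : Prop := exists n : int, `|r - n%:~R| < e.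

Lemma nearZ_int_shift e r s : nearZ e r -> (s - r) \is a Num.int -> nearZ e s.
Proof.
move=> [n hn] /floorK hsr; exists (n + Num.floor (s - r)).
by rewrite intrD hsr; have -> : s - (n%:~R + (s - r)) = r - n%:~R by ring.
Qed.

Lemma nearZ_small s : `|s| < 3/4 -> nearZ (1/4) s -> `|s| < 1/4.
Proof.
move=> hs [m hm].
have m0 : m = 0.
  have : `|(m%:~R : Rreal)| < 1.
    have -> : (m%:~R : Rreal) = s - (s - m%:~R) by ring.
    by apply: le_lt_trans (ler_normB _ _) _; lra.
  rewrite -intr_norm ltrz1 => hm1; lia.
by move: hm; rewrite m0 subr0.
Qed.

(* If t = k + d with 0 < |d| < 1/4, the least n with n|d| >= 1/4 has n|d| < 1/2,
   which is too far from the integers. *)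
Lemma T_no_small_subgroups t :
  (forall n : nat, nearZ (1/4) (n%:R * t)) -> t \is a Num.int.
Proof.
move=> h; have [k hk] := h 1%N; rewrite [_ * t]mul1r in hk.
have tE : t = k%:~R + (t - k%:~R) by rewrite addrC subrK.
have [d0|dn0] := eqVneq (t - k%:~R) 0; first by rewrite tE d0 addr0 rpred_int.
set d := t - k%:~R in hk tE dn0.
have ad : 0 < `|d| by rewrite normr_gt0.
have exP : exists n, (1/4 : Rreal) <= n%:R * `|d|.
  exists (Num.truncn (`|d|^-1)).+1.
  have : 1 < (Num.truncn `|d|^-1).+1%:R * `|d|.
    by rewrite -ltr_pdivrMr // div1r truncnS_gt.
  lra.
have [[|n] Pn nmin] := ex_minnP exP; first by move: Pn; rewrite mul0r; lra.
have hn : n%:R * `|d| < 1/4 by rewrite ltNge; apply/negP => /nmin; rewrite ltnn.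
have hn2 : `|n.+1%:R * d| < 3/4.
  by rewrite normrM normr_nat mulrS mulrDl mul1r; lra.
have : nearZ (1/4) (n.+1%:R * d).
  apply: (nearZ_int_shift (h n.+1)).
  have -> : n.+1%:R * d - n.+1%:R * t = - (n.+1%:R * k%:~R) by rewrite tE; ring.
  by rewrite rpredN rpredM ?rpred_int ?rpred_nat.
move=> /(nearZ_small hn2); rewrite normrM normr_nat; lra.
Qed.

Lemma nearZ_repr_piT e s : nearZ e (repr (piT s)) <-> nearZ e s.
Proof.
split => /nearZ_int_shift; apply; last exact: repr_piT.
by rewrite -opprB rpredN repr_piT.
Qed.

Lemma open_nearZ e : open [set t : TT | nearZ e (repr t)].
Proof.
change (open (piT @^-1` [set t : TT | nearZ e (repr t)])).
have -> : piT @^-1` [set t : TT | nearZ e (repr t)] =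
    \bigcup_(n in [set: int]) ball (n%:~R : Rreal) e.
  apply/seteqP; split => s /= => [/nearZ_repr_piT [n hn]|[n _ hn]].
    by exists n; rewrite // /ball /= distrC.
  by apply/nearZ_repr_piT; exists n; rewrite distrC.
by apply: bigcup_open => n _; exact: (@ball_open _ Rreal^o).
Qed.

Lemma open_T0_ball (O : set TT) : open O -> O Tzero ->
  exists2 del : Rreal, 0 < del & forall r, `|r| < del -> O (piT r).
Proof.
move=> oO O0.
have : nbhs (0 : Rreal) (piT @^-1` O) by apply: open_nbhs_nbhs; split.
move/nbhs_ballP => [e e0 he]; exists e => // r hr; apply: he.
by rewrite /ball /= sub0r normrN.
Qed.
Definition frac (r : Rreal) : Rreal := r - (Num.floor r)%:~R.

Lemma frac_itv r : 0 <= frac r < 1.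
Proof.
have := floor_itv r; rewrite intrD /frac => /andP[? ?].
by apply/andP; split; lra.
Qed.

Lemma frac_int r : (r - frac r) \is a Num.int.
Proof. by rewrite /frac opprB addrC subrK rpred_int. Qed.

Definition bin (N : nat) (r : Rreal) : 'I_N.+1 :=
  inord (Num.truncn (N.+1%:R * frac r)).

Lemma bin_eq_dist N a b : bin N a = bin N b -> `|frac a - frac b| < N.+1%:R^-1.
Proof.
set M : Rreal := N.+1%:R; have M0 : 0 < M by rewrite ltr0n.
have scaled_ge0 r : 0 <= M * frac r.
  by case/andP: (frac_itv r) => f0 _; apply: mulr_ge0 => //; exact: ltW.
have trunc_small r : (Num.truncn (M * frac r) < N.+1)%N.
  case/andP: (frac_itv r) => _ f1.
  by rewrite ltnS truncn_le_nat -[X in _ < X]mulr1 ltr_pM2l.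
move=> /(congr1 val); rewrite /= !inordK // => eab.
have : `|M * frac a - M * frac b| < 1.
  move: (truncn_itv (scaled_ge0 a)) (truncn_itv (scaled_ge0 b)).
  rewrite /M eab !mulrS ltr_norml => /andP[? ?] /andP[? ?]; apply/andP; split; lra.
by rewrite -mulrBr normrM (gtr0_norm M0) -ltr_pdivlMl // mulr1.
Qed.

Section Subgroups.
Variables (L : zmodType) (S : set L).
Hypothesis subS : is_subgroup S.

Lemma subgroupN x : S x -> S (- x).
Proof. by case: subS => S0 SB Sx; rewrite -sub0r; apply: SB. Qed.

Lemma subgroupD x y : S x -> S y -> S (x + y).
Proof. by case: subS => _ SB Sx Sy; rewrite -[y]opprK; apply/SB/subgroupN. Qed.

Lemma subgroup_mulrn h n : S h -> S (h *+ n).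
Proof.
move=> Sh; elim: n => [|n IH]; first by rewrite mulr0n; case: subS.
by rewrite mulrS; apply: subgroupD.
Qed.

Lemma subgroupI (T : set L) : is_subgroup T -> is_subgroup (S `&` T).
Proof.
case: subS => S0 SB [T0 TB]; split=> // x y [Sx Tx] [Sy Ty].
by split; [apply: SB | apply: TB].
Qed.

End Subgroups.

Section TopologicalSubgroups.
Variable L : topologicalZmodType.

Lemma continuous_subr (r : L) : continuous (fun y : L => y - r).
Proof.
move=> x; apply: (@continuous_comp _ _ _ (fun y => (y, r)) (fun p : L * L => p.1 - p.2)).
  by apply: cvg_pair; [exact: cvg_id | exact: cvg_cst].
exact: sub_continuous.
Qed.

Lemma nbhs_subr_preimage (x : L) (B : set L) :
  nbhs 0 B -> nbhs x [set y | B (y - x)].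
Proof. by move=> B0; apply: (@continuous_subr x x); rewrite subrr. Qed.

Lemma open_subr_preimage (U : set L) (k : L) :
  open U -> open [set y | U (y - k)].
Proof. by move=> oU; apply: open_comp oU => y _; exact: continuous_subr. Qed.

Lemma compact_subr_preimage (H : set L) (r : L) :
  compact H -> compact [set y | H (y - r)].
Proof.
move=> cH; have -> : [set y | H (y - r)] = (fun h => h - - r) @` H.
  apply/seteqP; split=> [y Hy|_ [h Hh <-]]; last by rewrite /= opprK addrK.
  by exists (y - r); rewrite // opprK subrK.
by apply: continuous_compact => //; apply: continuous_subspaceT; exact: continuous_subr.
Qed.

Variable S : set L.
Hypothesis subS : is_subgroup S.

Lemma open_subgroup_nbhs0 : nbhs 0 S -> open S.
Proof.
rewrite openE => S0 x Sx; apply: filterS (nbhs_subr_preimage x S0) => y Syx.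
by rewrite -(subrK x y); apply: subgroupD.
Qed.

Lemma open_subgroup_closed : open S -> closed S.
Proof.
move=> oS; rewrite -[S]setCK; apply: open_closedC; rewrite openE => x nSx.
have S0 : nbhs 0 S by apply: open_nbhs_nbhs; split => //; case: subS.
have := nbhs_subr_preimage x S0; apply: filterS => y Syx Sy.
by apply: nSx; rewrite -(subKr y x); apply: (subgroupD subS Sy) (subgroupN subS Syx).
Qed.

End TopologicalSubgroups.

Definition pointed_at (T : topologicalType) (t : T) : Type := T.
HB.instance Definition _ (T : topologicalType) (t : T) :=
  Topological.copy (pointed_at t) T.
HB.instance Definition _ (T : topologicalType) (t : T) :=
  isPointed.Build (pointed_at t) t.

(* [compact_cover] is only stated for pointed spaces; any point of [T] serves. *)
Lemma compact_cover_at (T : topologicalType) (t : T) (A : set T) :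
  compact A -> cover_compact A.
Proof. by move=> cA; have : @compact (pointed_at t) A := cA; rewrite compact_cover. Qed.

Lemma finite_fibers_subset_compact (L : topologicalZmodType) (F : finType)
    (phi : L -> F) (A H : set L) :
  compact H -> (forall x y, A x -> A y -> phi x = phi y -> H (x - y)) ->
  exists C, compact C /\ A `<=` C.
Proof.
move=> cH Hfib; pose rep s := xget 0 [set x | A x /\ phi x = s].
exists (\big[setU/set0]_(s <- enum F) [set y | H (y - rep s)]); split.
  by apply: bigsetU_compact => s _; exact: compact_subr_preimage.
move=> x Ax; rewrite -bigcup_seq; exists (phi x); first by rewrite /= mem_enum.
rewrite /rep; case: xgetP => [y _ [Ay phiy]|/(_ x)[]//]; exact: Hfib.
Qed.

Lemma compact_open_nbhs_cst (X Y : topologicalType) (y0 : Y)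
    (V : set {compact-open, X -> Y}) :
  nbhs (cst y0 : {compact-open, X -> Y}) V ->
  exists K O, [/\ compact K, open O, O y0 & [set g | g @` K `<=` O] `<=` V].
Proof.
pose I := [set p : set X * set Y | [/\ compact p.1, open p.2 & p.2 y0]].
pose B (p : set X * set Y) := [set g : {compact-open, X -> Y} | g @` p.1 `<=` p.2].
have FB : Filter (filter_from I B).
  apply: filter_from_filter.
    by exists (set0, setT); split=> //; [exact: compact0 | exact: openT].
  move=> [K O] [K' O'] [cK oO O0] [cK' oO' O'0].
  exists (K `|` K', O `&` O'); first by split=> /=; [exact: compactU | exact: openI | ].
  move=> g hg; split=> t [x Kx <-].
    by have [] := hg (g x) (ex_intro2 _ _ x (or_introl Kx) erefl).
  by have [] := hg (g x) (ex_intro2 _ _ x (or_intror Kx) erefl).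
have : filter_from I B --> (cst y0 : {compact-open, X -> Y}).
  apply/compact_open_cvgP => K O cK oO KO.
  have [[k Kk]|nK] := pselect (exists k, K k).
    by exists (K, O) => //; split=> //; apply: KO; exists k.
  exists (set0, setT); first by split=> //; [exact: compact0 | exact: openT].
  by move=> g _ t [x Kx _]; case: nK; exists x.
by move=> FB_cst /FB_cst [[K O] [cK oO O0] BV]; exists K, O.
Qed.
Section AlternatingPairing.
Variables (L : zmodType) (c : L -> L -> Rreal).
Hypothesis c_addl : forall x y z, (c (x + y) z - (c x z + c y z)) \is a Num.int.
Hypothesis c_addr : forall x y z, (c x (y + z) - (c x y + c x z)) \is a Num.int.
Hypothesis c_alt : forall x, c x x \is a Num.int.

Lemma pairing_subl x y z : (c (x - y) z - (c x z - c y z)) \is a Num.int.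
Proof.
have := c_addl (x - y) y z; rewrite subrK => h.
have -> : c (x - y) z - (c x z - c y z) = - (c x z - (c (x - y) z + c y z)) by ring.
by rewrite rpredN.
Qed.

Lemma pairing_subr x y z : (c x (y - z) - (c x y - c x z)) \is a Num.int.
Proof.
have := c_addr x (y - z) z; rewrite subrK => h.
have -> : c x (y - z) - (c x y - c x z) = - (c x y - (c x (y - z) + c x z)) by ring.
by rewrite rpredN.
Qed.

Lemma pairing0l x : c 0 x \is a Num.int.
Proof. by have := pairing_subl 0 0 x; rewrite !subrr subr0. Qed.

Lemma pairing0r x : c x 0 \is a Num.int.
Proof. by have := pairing_subr x 0 0; rewrite !subrr subr0. Qed.

Lemma pairing_mulrn x h n : (c x (h *+ n) - n%:R * c x h) \is a Num.int.
Proof.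
elim: n => [|n IH]; first by rewrite mulr0n mul0r subr0 pairing0r.
have -> : c x (h *+ n.+1) - n.+1%:R * c x h =
    (c x (h + h *+ n) - (c x h + c x (h *+ n))) + (c x (h *+ n) - n%:R * c x h).
  by rewrite mulrS [n.+1%:R]mulrS; ring.
exact: rpredD.
Qed.

(* Expand c (a + b) (a + b) by biadditivity; the alternating terms are integers. *)
Lemma pairing_skew a b : (c a b + c b a) \is a Num.int.
Proof.
have -> : c a b + c b a =
  c (a + b) (a + b) - (c (a + b) (a + b) - (c a (a + b) + c b (a + b)))
  - (c a (a + b) - (c a a + c a b)) - (c b (a + b) - (c b a + c b b))
  - c a a - c b b by ring.
apply: rpredB; last exact: c_alt.
apply: rpredB; last exact: c_alt.
apply: rpredB; last exact: c_addr.
apply: rpredB; last exact: c_addr.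
by apply: rpredB; [exact: c_alt | exact: c_addl].
Qed.

Lemma pairing_int_sym a b : c a b \is a Num.int -> c b a \is a Num.int.
Proof.
move=> h; have -> : c b a = (c a b + c b a) - c a b by ring.
by rewrite rpredB // pairing_skew.
Qed.

Definition perp (S : set L) : set L :=
  [set x | forall g, S g -> c x g \is a Num.int].

Definition isotropic (S : set L) := forall a b, S a -> S b -> c a b \is a Num.int.

Lemma perp_subgroup S : is_subgroup (perp S).
Proof.
split=> [g _|x y px py g Sg]; first exact: pairing0l.
have dxy : (c x g - c y g) \is a Num.int by exact: rpredB (px g Sg) (py g Sg).
by have := pairing_subl x y g; rewrite rpredBr.
Qed.

Lemma maximal_isotropic_superset U :
  isotropic U -> exists2 M, U `<=` M & M = perp M.
Proof.
move=> isoU.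
have [|A [isoA Amax]] := @Zorn_bigcup L (fun A => isotropic (A `|` U)).
  move=> F isoF chainF a b [[X FX Xa]|Ua] [[Y FY Yb]|Ub]; last exact: isoU.
  - have [XY|YX] := chainF X Y FX FY.
      by apply: (isoF Y FY); left => //; apply: XY.
    by apply: (isoF X FX); left => //; apply: YX.
  - by apply: (isoF X FX); [left|right].
  - by apply: (isoF Y FY); [right|left].
have perpA : perp (A `|` U) `<=` A.
  move=> z zp; apply: contrapT => zA.
  apply: (Amax (A `|` [set z])).
    by split=> [x Ax|/(_ z (or_intror erefl))]; [left | exact: zA].
  have memAzU x : (A `|` [set z] `|` U) x -> (A `|` U) x \/ x = z.
    by move=> [[Ax|->]|Ux]; [left; left|right|left; right].
  move=> a b /memAzU[aAU|->] /memAzU[bAU|->]; [exact: isoA | | exact: zp | exact: c_alt].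
  by apply: pairing_int_sym; apply: zp.
have UA : U `<=` A by move=> u Uu; apply: perpA => g Hg; apply: isoA => //; right.
have AUA : A `|` U = A by apply/seteqP; split=> x; [case=> // /UA | left].
exists A => //; apply/seteqP; split; last by rewrite -{1}AUA.
by move=> a Aa b Ab; apply: isoA; left.
Qed.

End AlternatingPairing.

Section SymplecticSelfDuality.
Variables (L : topologicalZmodType) (nabla : L -> L -> TT).
Hypothesis sympl : symplectic_self_duality nabla.

(* A real lift of the pairing: its identities hold modulo the integers. *)
Definition rnabla x y : Rreal := repr (nabla x y).

Lemma nablaE x y : nabla x y = piT (rnabla x y).
Proof. by rewrite piT_repr. Qed.

Lemma nabla_eq0 x y : nabla x y = Tzero <-> rnabla x y \is a Num.int.
Proof.
rewrite nablaE -[Tzero]/(piT 0).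
by split=> [/piT_eq|h]; rewrite ?subr0 //; apply/piT_eq; rewrite subr0.
Qed.

Lemma rnabla_addl x y z :
  (rnabla (x + y) z - (rnabla x z + rnabla y z)) \is a Num.int.
Proof. by case: sympl => -[_ addl _ _ _] _; apply/piT_eq; rewrite -Tadd_piT -!nablaE. Qed.

Lemma rnabla_addr x y z :
  (rnabla x (y + z) - (rnabla x y + rnabla x z)) \is a Num.int.
Proof.
case: sympl => -[dual_nabla _ _ _ _] _; apply/piT_eq; rewrite -Tadd_piT -!nablaE.
by case: (dual_nabla x).
Qed.

Lemma rnabla_alt x : rnabla x x \is a Num.int.
Proof. by case: sympl => _ alt; apply/nabla_eq0. Qed.

Lemma nabla0 y : nabla 0 y = Tzero.
Proof. exact/nabla_eq0/(pairing0l rnabla_addl). Qed.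

Lemma perp_compact_subgroup_nbhs0 (H : set L) :
  compact H -> is_subgroup H -> nbhs 0 (perp rnabla H).
Proof.
move=> cH subH; case: sympl => -[_ _ _ cont _] _.
pose small := [set t : TT | nearZ (1/4) (repr t)].
pose G := [set g : {compact-open, L -> TT} | g @` H `<=` small].
have : nbhs (nabla 0 : {compact-open, L -> TT}) G.
  apply: open_nbhs_nbhs; split; first by apply: compact_open_open => //; exact: open_nearZ.
  move=> _ [y _ <-]; rewrite /small /= nabla0; apply/nearZ_repr_piT.
  by exists 0; rewrite subrr normr0.
move=> /(@cont 0) nablaG; have : nbhs 0 (nabla @^-1` G) := nablaG.
apply: filterS => x Gx h Hh; apply: T_no_small_subgroups => n.
have /nearZ_int_shift : small (nabla x (h *+ n)).
  by apply: Gx; exists (h *+ n) => //; exact: subgroup_mulrn.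
by apply; rewrite -opprB rpredN; exact: (pairing_mulrn rnabla_addr).
Qed.

Lemma rnabla_perp_translate (U : set L) x f k :
  perp rnabla U x -> U (k - f) -> (rnabla x k - rnabla x f) \is a Num.int.
Proof.
move=> px Ukf; have := rnabla_addr x f (k - f); rewrite [f + _]addrC subrK => h.
have -> : rnabla x k - rnabla x f =
  (rnabla x k - (rnabla x f + rnabla x (k - f))) + rnabla x (k - f) by ring.
by rewrite rpredD // px.
Qed.

Lemma nabla_sub_perp (U : set L) x y f k :
  perp rnabla U x -> perp rnabla U y -> U (k - f) ->
  nabla (x - y) k = piT (frac (rnabla x f) - frac (rnabla y f)).
Proof.
move=> px py Ukf; rewrite nablaE; apply/piT_eq.
have -> : rnabla (x - y) k - (frac (rnabla x f) - frac (rnabla y f)) =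
  (rnabla (x - y) k - (rnabla x k - rnabla y k)) + (rnabla x k - rnabla x f)
  - (rnabla y k - rnabla y f) + (rnabla x f - frac (rnabla x f))
  - (rnabla y f - frac (rnabla y f)) by ring.
rewrite rpredBr ?frac_int // rpredDr ?frac_int // rpredBr ?(rnabla_perp_translate py) //.
by rewrite rpredDr ?(rnabla_perp_translate px) // (pairing_subl rnabla_addl).
Qed.

Lemma perp_open_subgroup_compact (H U : set L) :
  compact_open_subgroup H -> is_subgroup U -> open U ->
  exists C, compact C /\ perp rnabla U `<=` C.
Proof.
move=> [subH cH oH] subU oU.
case: sympl => -[dual_nabla _ [inj_nabla _] _ open_nabla] _.
have [V [oV nablaH]] := open_nabla H oH.
have [K [W [cK oW W0 KWV]]] : exists K W, [/\ compact K, open W, W Tzero &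
    [set g | g @` K `<=` W] `<=` V].
  apply: compact_open_nbhs_cst; apply: open_nbhs_nbhs; split => //.
  have -> : cst Tzero = nabla 0 by apply/funext => y; rewrite nabla0.
  have : (nabla @` H) (nabla 0) by exists 0 => //; case: subH.
  by rewrite nablaH => -[].
have [del del0 delO] := open_T0_ball oW W0.
have KU : K `<=` \bigcup_(k in K) [set y | U (y - k)].
  by move=> k Kk; exists k => //=; rewrite subrr; case: subU.
have [D _ KD] := compact_cover_at 0 cK (fun k _ => open_subr_preimage k oU) KU.
pose N := Num.truncn del^-1.
have hN : N.+1%:R^-1 < del by rewrite -ltf_pV2 ?(posrE, invr_gt0) // invrK truncnS_gt.
(* [phi x] records, to precision 1/N.+1, the values of [nabla x] at the centres of
   the cover of [K]. *)
pose phi (x : L) : {ffun D -> _} := [ffun f : D => bin N (rnabla x (val f))].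
apply: (@finite_fibers_subset_compact _ _ phi _ H cH) => x y px py phixy.
have : V (nabla (x - y)).
  apply: KWV => _ [k Kk <-]; have [f Df Ukf] := KD k Kk.
  rewrite (nabla_sub_perp px py Ukf); apply/delO/(lt_trans _ hN)/bin_eq_dist.
  by move/ffunP: phixy => /(_ (FSetSub Df)); rewrite !ffunE.
move=> Vxy; have : (nabla @` H) (nabla (x - y)) by rewrite nablaH; split.
by case=> h Hh /inj_nabla <-.
Qed.

End SymplecticSelfDuality.

Theorem lemma7p3 (L : topologicalZmodType) (nabla : L -> L -> TT) :
  LCA L -> symplectic_self_duality nabla ->
  (exists H : set L, compact_open_subgroup H) ->
  exists G : set L, compact_open_subgroup G /\
    G = [set x : L | forall g, G g -> nabla x g = Tzero].
Proof.
move=> _ sympl [H [subH cH oH]].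
pose U := H `&` perp (rnabla nabla) H.
have subU : is_subgroup U := subgroupI subH (perp_subgroup (rnabla_addl sympl) H).
have U0 : nbhs 0 U.
  apply: filterI; last exact: perp_compact_subgroup_nbhs0.
  by apply: open_nbhs_nbhs; split => //; case: subH.
have oU := open_subgroup_nbhs0 subU U0.
have [M UM Mperp] : exists2 M, U `<=` M & M = perp (rnabla nabla) M.
  apply: (maximal_isotropic_superset (rnabla_addl sympl) (rnabla_addr sympl)
    (rnabla_alt sympl)).
  by move=> a b [_ pa] [Hb _]; exact: pa.
have subM : is_subgroup M by rewrite Mperp; exact: (perp_subgroup (rnabla_addl sympl)).
have oM : open M by apply: open_subgroup_nbhs0 subM _; exact: filterS UM U0.
have [C [cC UC]] := perp_open_subgroup_compact sympl (And3 subH cH oH) subU oU.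
exists M; split.
  split=> //; apply: subclosed_compact (open_subgroup_closed subM oM) cC _.
  by rewrite Mperp => x Mx; apply: UC => u Uu; apply: Mx; exact: UM.
by rewrite {1}Mperp; apply/seteqP; split=> x px g /px /nabla_eq0.
Qed.
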